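(* Fix $k\ge1$, an index $1\le i\le k$, and constants $a,b,c\ge0$. For each $n$ let $(X_1,\dots,X_k)$ be an interval partition of $[n]$ and let $\phi$ be a labeling of the pairs of $[n]$ as described in the context. If $|X_{i-1}|=(a+o(1))n$, $|X_i|=(b+o(1))n$ and $|X_{i+1}|=(c+o(1))n$ as $n\to\infty$, then the number of bad triples $u<v<w$ with $v\in X_i$ is $\left[(a+b)b(b+c)+o(1)\right]\binom{n}{3}$.
   Context: An interval partition $(X_1,\dots,X_k)$ of $[n]$ is a sequence of disjoint (possibly empty) intervals of $[n]$ with union $[n]$ and $X_p<X_q$ (every element of $X_p$ below every element of $X_q$) for $p<q$; by convention $X_0=X_{k+1}=\emptyset$. For $u\in X_p$, the fractional index of $u$ in $X_p$ is $\lambda_u=(u+1-\min X_p)/|X_p|\in(0,1]$. The labeling $\phi$ of pairs $u<v$ with $u\in X_p$, $v\in X_q$ is defined by: if $p=q$ then $\phi(uv)=p$; if $q-p\ge2$ then $\phi(uv)$ is some integer with $p<\phi(uv)<q$; if $q=p+1$ then $\phi(uv)=p$ when $\lambda_u+\lambda_v\le1$ and $\phi(uv)=p+1$ when $\lambda_u+\lambda_v>1$. A triple $u<v<w$ is good if $\phi(uv)<\phi(vw)$ and bad otherwise. *)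

From mathcomp Require Import all_boot all_order all_algebra.
From mathcomp Require Import all_classical all_reals all_analysis.
Set Implicit Arguments. Unset Strict Implicit. Unset Printing Implicit Defensive.
Import Order.TTheory GRing.Theory Num.Theory.

(* Ground set [n] = {1,...,n}.  A family of parts is X : nat -> nat -> bool,
   X p u = "u belongs to X_p".  Indices p outside 1..k give empty parts
   (convention X_0 = X_{k+1} = emptyset). *)

Definition is_interval (A : nat -> bool) : Prop :=
  forall x y z, x <= y -> y <= z -> A x -> A z -> A y.

Definition interval_partition (n k : nat) (X : nat -> nat -> bool) : Prop :=
  [/\ (forall p, 1 <= p <= k -> is_interval (X p)),
      (forall p u, X p u -> (1 <= p <= k) /\ (1 <= u <= n)),
      (forall u, 1 <= u <= n -> exists p, X p u),
      (forall p q u, X p u -> X q u -> p = q) &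
      (forall p q u v, p < q -> X p u -> X q v -> u < v)].

Definition part_size (n : nat) (X : nat -> nat -> bool) (p : nat) : nat :=
  count (X p) (iota 1 n).

Definition part_min (n : nat) (X : nat -> nat -> bool) (p : nat) : nat :=
  head 0 (seq.filter (X p) (iota 1 n)).

Definition frac_index (n : nat) (X : nat -> nat -> bool) (p u : nat) : rat :=
  ((u.+1 - part_min n X p)%:R / (part_size n X p)%:R)%R.

Definition labeling (n k : nat) (X : nat -> nat -> bool)
    (phi : nat -> nat -> nat) : Prop :=
  forall u v p q, 1 <= u -> u < v -> v <= n -> X p u -> X q v ->
    [/\ (p = q -> phi u v = p),
        (p.+2 <= q -> p < phi u v < q) &
        (q = p.+1 ->
           phi u v = if (frac_index n X p u + frac_index n X q v <= 1)%R
                     then p else p.+1)].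

Definition bad (phi : nat -> nat -> nat) (u v w : nat) : bool :=
  ~~ (phi u v < phi v w).

Definition nbad_mid (n : nat) (X : nat -> nat -> bool)
    (phi : nat -> nat -> nat) (i : nat) : nat :=
  \sum_(1 <= u < n.+1) \sum_(u.+1 <= v < n.+1) \sum_(v.+1 <= w < n.+1)
     (X i v && bad phi u v w).

(* Let v be the j-th element of X_i and write A, B, C for |X_(i-1)|, |X_i|, |X_(i+1)|,
   so that lambda_v = j/B.  Since phi(uv) <= i <= phi(vw), the triple u < v < w is bad
   iff phi(uv) = i = phi(vw), so the bad triples through v number L(j) * R(j), where
   L(j) counts the j - 1 elements of X_i below v and the u in X_(i-1) with
   lambda_u > 1 - j/B, and R(j) the B - j elements of X_i above v and the w in X_(i+1)
   with lambda_w <= 1 - j/B.  Up to floors, B L(j) = j(A + B) and B R(j) = (B - j)(B + C),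
   so B^2 sum_j L(j) R(j) is sum_j j(B - j)(A + B)(B + C) = (B^3 - B)(A + B)(B + C)/6
   up to O(B^3 n); dividing by binomial(n, 3) ~ n^3/6 gives the limit. *)

From Pilot Require Import Defs.
From mathcomp Require Import all_boot all_order all_algebra.
From mathcomp Require Import all_classical all_reals all_analysis.
From mathcomp Require Import zify ring.
Import Order.TTheory GRing.Theory Num.Theory.
Import numFieldNormedType.Exports.
Set Implicit Arguments.

Lemma filter_iota_interval (S : pred nat) a len : Defs.is_interval S ->
  seq.filter S (iota a len) = iota (head 0 (seq.filter S (iota a len))) (count S (iota a len)).
Proof.
move=> intS; elim: len a => [//|len IH] a /=.
case: (boolP (S a)) => Sa /=; rewrite add0n; last exact: IH.
congr (_ :: _); move: (IH a.+1); set h := head 0 _; case: (count S _) => [//|c] e.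
have /and3P[Sh ah hlen] : S h && (a.+1 <= h < a.+1 + len).
  by rewrite -mem_iota -mem_filter e mem_head.
have Sa1 : S a.+1 by apply: (intS a a.+1 h) => //; lia.
have : a.+1 \in seq.filter S (iota a.+1 len) by rewrite mem_filter Sa1 mem_iota; lia.
by rewrite e inE mem_iota => /orP[/eqP -> //|]; lia.
Qed.

Lemma sum_ord_lt B t : \sum_(r < B) (r < t) = minn B t.
Proof.
elim: B => [|B IH]; first by rewrite big_ord0 min0n.
by rewrite big_ord_recr /= IH; lia.
Qed.

Lemma sum_ord_ge B t : \sum_(r < B) (t <= r) = B - t.
Proof.
elim: B => [|B IH]; first by rewrite big_ord0.
by rewrite big_ord_recr /= IH; lia.
Qed.

Lemma sum_nat_widenl {a b} N (F : nat -> nat) : a <= b ->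
  \sum_(b <= x < N) F x = \sum_(a <= x < N) (b <= x) * F x.
Proof.
move=> ab; rewrite (big_nat_widenl _ _ _ _ _ ab) big_mkcondr.
by apply: eq_bigr => x _; case: (b <= x); rewrite ?mul1n.
Qed.

Lemma frac_add_le1 (R : numFieldType) x y A B : 0 < A -> 0 < B -> y <= B ->
  (x%:R / A%:R + y%:R / B%:R <= 1 :> R)%R = (x * B <= (B - y) * A).
Proof.
move=> A0 B0 yB; have AB0 : (0 < (A * B)%:R :> R)%R by rewrite ltr0n muln_gt0 A0.
rewrite -(ler_pM2r AB0) mul1r.
have -> : ((x%:R / A%:R + y%:R / B%:R) * (A * B)%:R = (x * B + y * A)%:R :> R)%R.
  by rewrite !natrD !natrM; field; rewrite !pnatr_eq0 -!lt0n A0 B0.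
have yAB : y * A <= B * A by rewrite leq_mul2r yB orbT.
by rewrite ler_nat mulnBl; lia.
Qed.

(* Closed forms of L(j) and R(j), with the floors written as %/. *)
Definition left_count A B j := j.-1 + (A - (B - j) * A %/ B).
Definition right_count B C j := (B - j) + (B - j) * C %/ B.
Definition middle_count A B C :=
  \sum_(r < B) left_count A B r.+1 * right_count B C r.+1.

Section IntervalPartition.

Variables (n k : nat) (X : nat -> nat -> bool).
Hypothesis partX : interval_partition n k X.

Lemma part_interval p : Defs.is_interval (X p).
Proof.
case: partX => intX inX _ _ _.
have [/intX //|p_out x y z _ _ /inX[p_in _]] := boolP (1 <= p <= k).
by rewrite p_in in p_out.
Qed.

Lemma part_range {p u} : X p u -> 0 < u <= n.
Proof. by case: partX => _ inX _ _ _ /inX[]. Qed.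

Lemma part_eq {p u} q : X p u -> X q u = (q == p).
Proof.
case: partX => _ _ _ uniqX _ Xpu.
by apply/idP/eqP => [Xqu|->//]; exact: uniqX Xqu Xpu.
Qed.

Lemma part_cover u : 0 < u <= n -> exists p, X p u.
Proof. by case: partX => _ _ coverX _ _ /coverX. Qed.

Lemma part_lt {p q u v} : p < q -> X p u -> X q v -> u < v.
Proof. by case: partX => _ _ _ _; apply. Qed.

Lemma part_monotone {p q u v} : X p u -> X q v -> u < v -> p <= q.
Proof.
move=> Xpu Xqv uv; rewrite leqNgt; apply/negP => qp.
by have := part_lt qp Xqv Xpu; lia.
Qed.

Local Notation m p := (part_min n X p).
Local Notation s p := (part_size n X p).

Lemma filter_part p : seq.filter (X p) (iota 1 n) = iota (m p) (s p).
Proof. by rewrite /part_min /part_size -filter_iota_interval //; exact: part_interval. Qed.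

Lemma mem_part p u : X p u = (m p <= u < m p + s p).
Proof.
rewrite -mem_iota -filter_part mem_filter mem_iota.
by case: (boolP (X p u)) => //= /part_range; lia.
Qed.

Lemma frac_index_shift p r : frac_index n X p (m p + r) = (r.+1%:R / (s p)%:R)%R.
Proof. by rewrite /frac_index -addnS addKn. Qed.

Lemma part_size_disjoint p q : p != q -> s p + s q <= n.
Proof.
move=> pq; rewrite /part_size -count_predUI.
have -> : count (predI (X p) (X q)) (iota 1 n) = 0.
  apply/eqP; rewrite -leqn0 leqNgt -has_count; apply/hasP => -[u _ /andP[Xpu]].
  by rewrite (part_eq q Xpu) eq_sym (negbTE pq).
by rewrite addn0 -[X in _ <= X](size_iota 1 n) count_size.
Qed.

Lemma sum_part p (F : nat -> nat) :
  \sum_(1 <= u < n.+1) X p u * F u = \sum_(r < s p) F (m p + r).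
Proof.
have -> : \sum_(1 <= u < n.+1) X p u * F u = \sum_(1 <= u < n.+1 | X p u) F u.
  by rewrite [RHS]big_mkcond; apply: eq_bigr => u _; case: (X p u); rewrite ?mul1n.
rewrite -big_filter /index_iota subSS subn0 filter_part.
rewrite -{1}(addn0 (m p)) iotaDl big_map.
by rewrite -(big_mkord xpredT (fun r => F (m p + r))) /index_iota subn0.
Qed.

End IntervalPartition.

Section BadTriples.

Variables (n k : nat) (X : nat -> nat -> bool) (phi : nat -> nat -> nat).
Hypotheses (partX : interval_partition n k X) (labphi : labeling n k X phi).

Local Notation lam := (frac_index n X).

Lemma label_between u v p q : 0 < u -> u < v -> v <= n -> X p u -> X q v ->
  p <= phi u v <= q.
Proof.
move=> u0 uv vn Xpu Xqv; have pq := part_monotone partX Xpu Xqv uv.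
have [eq_pq lt_pq adj_pq] := labphi u0 uv vn Xpu Xqv.
have : p = q \/ q = p.+1 \/ p.+1 < q by lia.
case=> [eq|[adj|far]]; first by rewrite eq_pq //; lia.
  by rewrite adj_pq //; case: ifP; lia.
by have := lt_pq far; lia.
Qed.

Lemma label_eq_right u v p q : 0 < u -> u < v -> v <= n -> X p u -> X q v ->
  (phi u v == q) = (p == q) || (q == p.+1) && ~~ (lam p u + lam q v <= 1)%R.
Proof.
move=> u0 uv vn Xpu Xqv; have pq := part_monotone partX Xpu Xqv uv.
have [eq_pq lt_pq adj_pq] := labphi u0 uv vn Xpu Xqv.
have : p = q \/ q = p.+1 \/ p.+1 < q by lia.
case=> [eq|[adj|far]]; first by rewrite eq_pq // eq eqxx.
  by rewrite adj_pq // adj eqxx; case: ifP; lia.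
by have := lt_pq far; lia.
Qed.

Lemma label_eq_left u v p q : 0 < u -> u < v -> v <= n -> X p u -> X q v ->
  (phi u v == p) = (p == q) || (q == p.+1) && (lam p u + lam q v <= 1)%R.
Proof.
move=> u0 uv vn Xpu Xqv; have pq := part_monotone partX Xpu Xqv uv.
have [eq_pq lt_pq adj_pq] := labphi u0 uv vn Xpu Xqv.
have : p = q \/ q = p.+1 \/ p.+1 < q by lia.
case=> [eq|[adj|far]]; first by rewrite eq_pq // eq eqxx.
  by rewrite adj_pq // adj eqxx; case: ifP; lia.
by have := lt_pq far; lia.
Qed.

Variable i : nat.
Hypothesis i_gt0 : 0 < i.

Local Notation m p := (part_min n X p).
Local Notation s p := (part_size n X p).

Lemma bad_middle {u v w} : X i v -> 0 < u -> u < v -> v < w -> w <= n ->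
  bad phi u v w = (phi u v == i) && (phi v w == i).
Proof.
move=> Xiv u0 uv vw wn.
have [p Xpu] := part_cover partX u ltac:(lia).
have [q Xqw] := part_cover partX w ltac:(lia).
have := label_between u0 uv (ltnW (leq_trans vw wn)) Xpu Xiv.
have := label_between (ltn_trans u0 uv) vw wn Xiv Xqw.
rewrite /bad; lia.
Qed.

Lemma left_label_indicator {u v} : X i v -> 0 < u <= n ->
  (u < v) * (phi u v == i) =
  X i u * (u < v) + X i.-1 u * ~~ (lam i.-1 u + lam i v <= 1)%R.
Proof.
move=> Xiv /andP[u0 un]; have [p Xpu] := part_cover partX u ltac:(lia).
rewrite (part_eq partX i Xpu) (part_eq partX i.-1 Xpu).
have [uv|vu] := ltnP u v; last first.
  have pi : i.-1 != p.
    by apply/eqP => ip; have := part_lt partX (_ : p < i) Xpu Xiv; lia.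
  by rewrite (negbTE pi) ?muln0 ?mul0n.
have /andP[_ vn] := part_range partX Xiv.
rewrite (label_eq_right u0 uv vn Xpu Xiv).
have [->|pi] := eqVneq p i; first by rewrite /=; lia.
rewrite (_ : (i == p.+1) = (i.-1 == p)); last by lia.
by case: eqVneq => [->|] /=; lia.
Qed.

Lemma right_label_indicator {v w} : X i v -> 0 < w <= n ->
  (v < w) * (phi v w == i) =
  X i w * (v < w) + X i.+1 w * (lam i v + lam i.+1 w <= 1)%R.
Proof.
move=> Xiv /andP[w0 wn]; have [q Xqw] := part_cover partX w ltac:(lia).
rewrite (part_eq partX i Xqw) (part_eq partX i.+1 Xqw).
have [vw|wv] := ltnP v w; last first.
  have qi : i.+1 != q.
    by apply/eqP => iq; have := part_lt partX (_ : i < q) Xiv Xqw; lia.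
  by rewrite (negbTE qi) ?muln0 ?mul0n.
have /andP[v0 _] := part_range partX Xiv.
rewrite (label_eq_left v0 vw wn Xiv Xqw).
have [<-|qi] := eqVneq i q; first by rewrite /=; lia.
by case: eqVneq => [<-|] /=; lia.
Qed.

Lemma sum_left_label v : X i v ->
  \sum_(1 <= u < n.+1) (u < v) * (phi u v == i) = left_count (s i.-1) (s i) (v.+1 - m i).
Proof.
move=> Xiv; have := Xiv; rewrite (mem_part partX) => /andP[mv vm].
under eq_big_nat => u hu do rewrite (left_label_indicator Xiv hu).
rewrite big_split /= !(sum_part partX).
have jB : 0 < v.+1 - m i <= s i by lia.
set A := s i.-1; set B := s i; set j := v.+1 - m i.
have -> : \sum_(r < B) (m i + r < v) = \sum_(r < B) (r < v - m i).
  by apply: eq_bigr => r _; rewrite ltn_subRL.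
have -> : \sum_(r < A) ~~ (lam i.-1 (m i.-1 + r) + lam i v <= 1)%R =
          \sum_(r < A) ((B - j) * A %/ B <= r).
  apply: eq_bigr => r _; have rA := ltn_ord r.
  rewrite frac_index_shift /frac_index -/A -/B -/j.
  by rewrite frac_add_le1 -?leq_divRL -?ltnNge //; lia.
by rewrite sum_ord_lt sum_ord_ge /left_count; congr (_ + _); lia.
Qed.

Lemma sum_right_label v : X i v ->
  \sum_(1 <= w < n.+1) (v < w) * (phi v w == i) = right_count (s i) (s i.+1) (v.+1 - m i).
Proof.
move=> Xiv; have := Xiv; rewrite (mem_part partX) => /andP[mv vm].
under eq_big_nat => w hw do rewrite (right_label_indicator Xiv hw).
rewrite big_split /= !(sum_part partX).
have jB : 0 < v.+1 - m i <= s i by lia.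
set B := s i; set C := s i.+1; set j := v.+1 - m i.
have -> : \sum_(r < B) (v < m i + r) = \sum_(r < B) (j <= r).
  by apply: eq_bigr => r _; rewrite /j; lia.
have -> : \sum_(r < C) (lam i v + lam i.+1 (m i.+1 + r) <= 1)%R =
          \sum_(r < C) (r < (B - j) * C %/ B).
  apply: eq_bigr => r _; have rC := ltn_ord r.
  rewrite frac_index_shift /frac_index -/B -/C -/j addrC.
  by rewrite frac_add_le1 -?leq_divRL //; lia.
rewrite sum_ord_lt sum_ord_ge /right_count; congr (_ + _).
apply/minn_idPr; rewrite -ltnS ltn_divLR; nia.
Qed.

Lemma bad_middle_indicator u v w : X i v -> 0 < u -> w <= n ->
  (u < v) * ((v < w) * (X i v && bad phi u v w)) =
  ((u < v) * (phi u v == i)) * ((v < w) * (phi v w == i)).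
Proof.
move=> Xiv u0 wn; case: (ltnP u v) => uv //; case: (ltnP v w) => vw; last by rewrite !muln0.
by rewrite (bad_middle Xiv u0 uv vw wn) Xiv; case: (phi u v == i); case: (phi v w == i).
Qed.

Lemma nbad_mid_factor : nbad_mid n X phi i = \sum_(1 <= v < n.+1) X i v *
  ((\sum_(1 <= u < n.+1) (u < v) * (phi u v == i)) *
   (\sum_(1 <= w < n.+1) (v < w) * (phi v w == i))).
Proof.
rewrite /nbad_mid (eq_big_nat _ _ (F2 := fun u => \sum_(1 <= v < n.+1)
  \sum_(1 <= w < n.+1) (u < v) * ((v < w) * (X i v && bad phi u v w)))); last first.
  move=> u _; rewrite (sum_nat_widenl _ _ (ltn0Sn u)).
  by apply: eq_bigr => v _; rewrite (sum_nat_widenl _ _ (ltn0Sn v)) big_distrr.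
rewrite exchange_big_nat; apply: eq_big_nat => v _.
have /orP[Xiv|nXiv] := orbN (X i v); last first.
  rewrite (negbTE nXiv) /= mul0n big1 // => u _.
  by rewrite big1 // => w _; rewrite /= !muln0.
rewrite [in RHS]Xiv mul1n big_distrl; apply: eq_big_nat => u /andP[u0 _].
by rewrite big_distrr; apply: eq_big_nat => w /andP[_ wn]; rewrite bad_middle_indicator.
Qed.

Lemma nbad_mid_eq : nbad_mid n X phi i =
  middle_count (s i.-1) (s i) (s i.+1).
Proof.
rewrite /middle_count nbad_mid_factor (eq_bigr (fun v => X i v *
  (left_count (s i.-1) (s i) (v.+1 - m i) * right_count (s i) (s i.+1) (v.+1 - m i)))).
  by rewrite (sum_part partX); apply: eq_bigr => r _; rewrite -addnS addKn.
move=> v _; have /orP[Xiv|nXiv] := orbN (X i v); last by rewrite (negbTE nXiv).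
by rewrite sum_left_label ?sum_right_label.
Qed.

End BadTriples.

Lemma sum_ord_mul_sub B : 6 * \sum_(r < B) r.+1 * (B - r.+1) + B = B ^ 3.
Proof.
have sum_succ : forall N, 2 * \sum_(r < N) r.+1 = N * N.+1.
  by elim=> [|N IH]; rewrite ?big_ord0 // big_ord_recr /= mulnDr IH; lia.
elim: B => [|B IH]; first by rewrite big_ord0.
rewrite big_ord_recr /= subnn muln0 addn0.
have -> : \sum_(r < B) r.+1 * (B.+1 - r.+1) =
          \sum_(r < B) r.+1 * (B - r.+1) + \sum_(r < B) r.+1.
  rewrite -big_split; apply: eq_bigr => r _ /=.
  by rewrite subSS -mulnSr -subSn ?ltn_ord.
have := sum_succ B; rewrite !expnS expn0 => hS; nia.
Qed.

Lemma leq_mul_approx x y x' y' e : x' <= x <= x' + e -> y' <= y <= y' + e ->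
  x' * y' <= x * y <= x' * y' + e * (x + y).
Proof. move=> /andP[lx ux] /andP[ly uy]; nia. Qed.

Lemma left_count_bounds A B j : 0 < j <= B ->
  B * left_count A B j <= j * (A + B) <= B * left_count A B j + B.
Proof.
move=> jB; rewrite /left_count; set q := (B - j) * A %/ B.
have B0 : 0 < B by lia.
have lo : q * B <= (B - j) * A by exact: leq_divM.
have hi : (B - j) * A < q * B + B by rewrite -mulSnr ltn_ceil.
have qA : q <= A by rewrite -ltnS ltn_divLR //; nia.
nia.
Qed.

Lemma right_count_bounds B C j : 0 < B -> j <= B ->
  B * right_count B C j <= (B - j) * (B + C) <= B * right_count B C j + B.
Proof.
move=> B0 jB; rewrite /right_count; set q := (B - j) * C %/ B.
have lo : q * B <= (B - j) * C by exact: leq_divM.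
have hi : (B - j) * C < q * B + B by rewrite -mulSnr ltn_ceil.
nia.
Qed.

Lemma middle_count_bounds A B C n : A + B <= n -> B + C <= n ->
  6 * middle_count A B C <= (A + B) * B * (B + C) <= 6 * middle_count A B C + 13 * n ^ 2.
Proof.
move=> ABn BCn; have [->|B0] := posnP B; first by rewrite /middle_count big_ord0 !muln0.
set G := middle_count A B C; set P := (A + B) * (B + C).
set S := \sum_(r < B) r.+1 * (B - r.+1).
have S6 := sum_ord_mul_sub B; rewrite -/S in S6.
have PS : P * S = \sum_(r < B) r.+1 * (A + B) * ((B - r.+1) * (B + C)).
  by rewrite big_distrr; apply: eq_bigr => r _ /=; rewrite /P; ring.
have term r : r < B -> B * B * (left_count A B r.+1 * right_count B C r.+1) <=
    r.+1 * (A + B) * ((B - r.+1) * (B + C)) <=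
    B * B * (left_count A B r.+1 * right_count B C r.+1) + 2 * (B * (B * n)).
  move=> rB; have /leq_mul_approx := left_count_bounds A B r.+1 rB.
  move=> /(_ _ _ (right_count_bounds B C r.+1 B0 rB)); rewrite mulnACA => /andP[lo hi].
  have xn : r.+1 * (A + B) <= B * n by exact: leq_mul.
  have yn : (B - r.+1) * (B + C) <= B * n by rewrite leq_mul ?leq_subr.
  by rewrite lo (leq_trans hi) // leq_add2l mulnCA leq_mul2l; lia.
have GPS : B * B * G <= P * S <= B * B * G + B * (2 * (B * (B * n))).
  have -> : B * (2 * (B * (B * n))) = \sum_(r < B) 2 * (B * (B * n)).
    by rewrite sum_nat_const card_ord.
  rewrite PS /G /middle_count big_distrr -big_split /=.
  by apply/andP; split; apply: leq_sum => r _; have /andP[] := term r (ltn_ord r).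
have Bn : B <= n by lia.
have P_le : P <= n * n by rewrite leq_mul.
rewrite (_ : (A + B) * B * (B + C) = P * B); last by rewrite /P; ring.
clearbody G P S.
have PB3 : B * B * (P * B) = 6 * (P * S) + P * B.
  have -> : 6 * (P * S) + P * B = P * (6 * S + B) by ring.
  by rewrite S6; ring.
have err1 : B * (B * (B * n)) <= B * (B * (n * n)).
  by rewrite !leq_mul2l leq_mul2r Bn !orbT.
have err2 : P * B <= B * B * (n * n).
  by rewrite mulnC leq_mul ?leq_pmulr ?leq_mul.
have BB0 : 0 < B * B by rewrite muln_gt0 B0.
by apply/andP; split; rewrite -(leq_pmul2l BB0) PB3; lia.
Qed.

Local Open Scope ring_scope.
Local Open Scope classical_set_scope.

Lemma mul6_binom3 n : (6 * 'C(n, 3) = n * (n - 1) * (n - 2))%N.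
Proof.
by rewrite mulnC -[6%N]/(3`!) bin_ffact !ffactnSr ffactn0 mul1n subn0.
Qed.

Section Asymptotics.

Variable R : realType.

Lemma cvg_invn : (fun n : nat => (n%:R : R)^-1) @ \oo --> 0.
Proof.
apply/gtr0_cvgV0; last exact: cvgr_idn.
by near=> n; rewrite ltr0n; near: n; exact: nbhs_infty_gt.
Unshelve. all: end_near.
Qed.

Lemma cvg_binom3 : (fun n => (6 * 'C(n, 3))%:R / n%:R ^+ 3 : R) @ \oo --> (1 : R).
Proof.
have lim : (fun n => (1 - (n%:R : R)^-1) * (1 - 2 * (n%:R)^-1)) @ \oo -->
           ((1 - 0) * (1 - 2 * 0) : R).
  exact: cvgM (cvgB (cvg_cst _) cvg_invn) (cvgB (cvg_cst _) (cvgM (cvg_cst _) cvg_invn)).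
rewrite mulr0 subr0 mulr1 in lim.
apply: cvg_trans lim; apply: near_eq_cvg; near=> n.
have n2 : (2 <= n)%N by near: n; exact: nbhs_infty_ge.
have n0 : (n%:R : R) != 0 by rewrite pnatr_eq0; lia.
have -> : (6 * 'C(n, 3))%:R = (n%:R * (n%:R - 1) * (n%:R - 2) : R).
  by rewrite mul6_binom3 !natrM !natrB //; lia.
by field.
Unshelve. all: end_near.
Qed.

Lemma cvg_div_binom3 (N P : nat -> nat) (K : nat) (l : R) :
  (fun n => (P n)%:R / n%:R ^+ 3 : R) @ \oo --> l ->
  (forall n, 6 * N n <= P n <= 6 * N n + K * n ^ 2)%N ->
  (fun n => (N n)%:R / ('C(n, 3))%:R : R) @ \oo --> l.
Proof.
move=> limP NP.
have lim6N : (fun n => (6 * N n)%:R / n%:R ^+ 3 : R) @ \oo --> l.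
  have limPK : (fun n => (P n)%:R / n%:R ^+ 3 - K%:R * n%:R^-1 : R) @ \oo --> l - K%:R * 0.
    exact: cvgB limP (cvgM (cvg_cst _) cvg_invn).
  rewrite mulr0 subr0 in limPK.
  apply: (squeeze_cvgr _ limPK limP); near=> n.
  have n0 : (0 < n)%N by near: n; exact: nbhs_infty_gt.
  have n3 : (0 : R) < n%:R ^+ 3 by rewrite exprn_gt0 // ltr0n.
  have /andP[lo hi] := NP n; rewrite -(ler_nat R) in lo; rewrite -(ler_nat R) in hi.
  rewrite ler_pM2r ?invr_gt0 // lo andbT.
  have -> : K%:R * (n%:R : R)^-1 = (K * n ^ 2)%:R / n%:R ^+ 3.
    by rewrite natrM natrX; field; rewrite pnatr_eq0 -lt0n.
  by rewrite -mulrBl ler_pM2r ?invr_gt0 // lerBlDr -natrD.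
have lim : (fun n => (6 * N n)%:R / n%:R ^+ 3 * ((6 * 'C(n, 3))%:R / n%:R ^+ 3)^-1 : R)
    @ \oo --> l * 1^-1.
  exact: cvgM lim6N (cvgV (oner_neq0 R) cvg_binom3).
rewrite invr1 mulr1 in lim; apply: cvg_trans lim; apply: near_eq_cvg; near=> n.
have n3 : (3 <= n)%N by near: n; exact: nbhs_infty_ge.
have n0 : (n%:R : R) != 0 by rewrite pnatr_eq0 -lt0n; lia.
have C0 : ('C(n, 3)%:R : R) != 0 by rewrite pnatr_eq0 -lt0n bin_gt0.
by rewrite /= !natrM; field; rewrite n0 C0.
Unshelve. all: end_near.
Qed.

Lemma cvg_cubic_ratio (A B C : nat -> nat) (a b c : R) :
  (fun n => (A n)%:R / n%:R : R) @ \oo --> a ->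
  (fun n => (B n)%:R / n%:R : R) @ \oo --> b ->
  (fun n => (C n)%:R / n%:R : R) @ \oo --> c ->
  (fun n => ((A n + B n) * B n * (B n + C n))%:R / n%:R ^+ 3 : R) @ \oo -->
    (a + b) * b * (b + c).
Proof.
move=> limA limB limC.
have lim : (fun n => ((A n)%:R / n%:R + (B n)%:R / n%:R) * ((B n)%:R / n%:R) *
    ((B n)%:R / n%:R + (C n)%:R / n%:R) : R) @ \oo --> (a + b) * b * (b + c).
  exact: cvgM (cvgM (cvgD limA limB) limB) (cvgD limB limC).
apply: cvg_trans lim; apply: near_eq_cvg; near=> n.
have n0 : (n%:R : R) != 0 by rewrite pnatr_eq0 -lt0n; near: n; exact: nbhs_infty_gt.
by rewrite /= !natrM !natrD; field.
Unshelve. all: end_near.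
Qed.

End Asymptotics.

Theorem lemma4p4 (R : realType) (k i : nat) (a b c : R)
  (X : nat -> nat -> nat -> bool) (phi : nat -> nat -> nat -> nat) :
  (1 <= k)%N -> (1 <= i <= k)%N -> 0 <= a -> 0 <= b -> 0 <= c ->
  (forall n, interval_partition n k (X n)) ->
  (forall n, labeling n k (X n) (phi n)) ->
  (fun n : nat => (part_size n (X n) i.-1)%:R / n%:R : R) @ \oo --> a ->
  (fun n : nat => (part_size n (X n) i)%:R / n%:R : R) @ \oo --> b ->
  (fun n : nat => (part_size n (X n) i.+1)%:R / n%:R : R) @ \oo --> c ->
  (fun n : nat => (nbad_mid n (X n) (phi n) i)%:R / ('C(n, 3))%:R : R)
    @ \oo --> (a + b) * b * (b + c).
Proof.
move=> _ /andP[i_gt0 _] _ _ _ partX labphi limA limB limC.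
apply: (cvg_div_binom3 (fun n => nbad_mid n (X n) (phi n) i) _ 13).
  exact: cvg_cubic_ratio limA limB limC.
move=> n; rewrite (nbad_mid_eq (partX n) (labphi n) i i_gt0).
by apply: middle_count_bounds; apply: (part_size_disjoint (partX n)); lia.
Qed.
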